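(* Assume $(-)_0\colon\mathcal E\to\mathrm{Mon}(\mathcal V)$ is $\mathcal V$-geometrical and that $U'\colon\mathrm{Mod}(\mathcal E)\to\mathcal E$ has a left adjoint $L'$. Then for every $E\in\mathcal E$ the object $\Omega:=L'E\in{}_E\mathrm{Mod}_E$ (so that $KL'E=(E_0,\Omega_0)$) together with the morphism $d\colon E_0\to\Omega_0$ determined by the unit $\eta_E\colon E\to U'L'E$ (whose underlying monoid map is $(1_{E_0},d)$) is a first order $\mathcal E$-differential calculus over $E$.
   Context: Standing: $\mathcal V$ is a monoidal additive category ($\mathbf{Ab}$-enriched, finite biproducts, tensor additive in each variable) with finite limits and colimits, tensor preserving finite colimits in each variable. $\mathrm{Mod}(\mathcal V)$: pairs $(A,M)$, $A$ monoid, $M$ an $A$-bimodule; square-zero extension $U(A,M)=A\oplus M$ with unit $(i,0)$ and multiplication $(m,\mu+\nu+0)$. $(-)_0\colon\mathcal E\to\mathrm{Mon}(\mathcal V)$ is a faithful isofibration. $\mathrm{Mod}(\mathcal E)$ is the pullback of $U$ along $(-)_0$: objects $(X,(A,M))$ with $X_0=A\oplus M$; projections $U'$ to $\mathcal E$, $K$ to $\mathrm{Mod}(\mathcal V)$. For $E\in\mathcal E$, ${}_E\mathrm{Mod}_E$ is the pullback of $M\mapsto E_0\oplus M$ (${}_{E_0}\mathrm{Mod}_{E_0}\to\mathrm{Mon}(\mathcal V)$) along $(-)_0$: objects $\Omega=(\hat E,\Omega_0)$ with $\hat E_0=E_0\oplus\Omega_0$; $U'_E(\Omega)=\hat E$;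 $V_E\colon{}_E\mathrm{Mod}_E\to\mathcal V$ sends $\Omega$ to the underlying object of $\Omega_0$. $(-)_0$ is weakly $\mathcal V$-geometrical if for all $E\in\mathcal E$, $X\in\mathrm{Mod}(\mathcal E)$ with $KX=(A,M)$ and $f\colon E\to U'X$ whose underlying map $f_0=(f_1,f_2)$ has $f_1$ mono, there exist $Y$ with $KY=(E_0,N)$, $k\colon E\to U'Y$ with $k_0=(1_{E_0},k_1)$, and $l\colon Y\to X$ with $U'l\circ k=f$; it is $\mathcal V$-geometrical if moreover each $V_E$ has a left adjoint $L_E$. A first order $\mathcal E$-differential calculus over $E$ is $\Omega\in{}_E\mathrm{Mod}_E$ with $d\colon E_0\to\Omega_0$ in $\mathcal V$ such that $(1_{E_0},d)\colon E_0\to E_0\oplus\Omega_0$ is a monoid morphism lifting to $\hat d\colon E\to U'_E(\Omega)$ in $\mathcal E$ with $\hat d_0=(1_{E_0},d)$, and the transpose $d^t\colon L_E(E_0)\to\Omega$ of $d$ under $L_E\dashv V_E$ is an epimorphism in ${}_E\mathrm{Mod}_E$. *)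

From Stdlib Require Import Logic.ProofIrrelevance.
Set Implicit Arguments.
Unset Strict Implicit.

Record Cat := {
  ob : Type;
  hom : ob -> ob -> Type;
  idm : forall a, hom a a;
  comp : forall {a b c}, hom b c -> hom a b -> hom a c;
  comp_id_l : forall a b (f : hom a b), comp (idm b) f = f;
  comp_id_r : forall a b (f : hom a b), comp f (idm a) = f;
  comp_assoc : forall a b c d (h : hom c d) (g : hom b c) (f : hom a b),
      comp h (comp g f) = comp (comp h g) f }.
Arguments hom {C} a b : rename.
Arguments idm {C} a : rename.
Arguments comp {C a b c} _ _ : rename.

Section CatDefs.
Variable C : Cat.
Definition IsIso {a b : ob C} (f : hom a b) : Prop :=
  exists g : hom b a, comp g f = idm a /\ comp f g = idm b.
Definition Mono {a b : ob C} (f : hom a b) : Prop :=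
  forall z (u v : hom z a), comp f u = comp f v -> u = v.
Definition IsEqualizer {a b e : ob C} (f g : hom a b) (m : hom e a) : Prop :=
  comp f m = comp g m /\
  forall z (h : hom z a), comp f h = comp g h -> exists! k : hom z e, comp m k = h.
Definition IsCoequalizer {a b c : ob C} (f g : hom a b) (q : hom b c) : Prop :=
  comp q f = comp q g /\
  forall z (h : hom b z), comp h f = comp h g -> exists! k : hom c z, comp k q = h.
End CatDefs.
Arguments IsIso {C a b} f.
Arguments Mono {C a b} f.
Arguments IsEqualizer {C a b e} f g m.
Arguments IsCoequalizer {C a b c} f g q.

Record MonAddCat (C : Cat) := {
  zer : forall {a b : ob C}, hom a b;
  add : forall {a b : ob C}, hom a b -> hom a b -> hom a b;
  opp : forall {a b : ob C}, hom a b -> hom a b;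
  add_assoc : forall a b (f g h : hom a b), add f (add g h) = add (add f g) h;
  add_comm : forall a b (f g : hom a b), add f g = add g f;
  add_0l : forall a b (f : hom a b), add zer f = f;
  add_oppl : forall a b (f : hom a b), add (opp f) f = zer;
  comp_addl : forall a b c (f g : hom b c) (h : hom a b),
      comp (add f g) h = add (comp f h) (comp g h);
  comp_addr : forall a b c (h : hom b c) (f g : hom a b),
      comp h (add f g) = add (comp h f) (comp h g);
  zob : ob C;
  zob_id : idm zob = zer;
  bp : ob C -> ob C -> ob C;
  bi1 : forall {a b}, hom a (bp a b);
  bi2 : forall {a b}, hom b (bp a b);
  bp1 : forall {a b}, hom (bp a b) a;
  bp2 : forall {a b}, hom (bp a b) b;
  bp1i1 : forall a b, comp (@bp1 a b) bi1 = idm a;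
  bp2i2 : forall a b, comp (@bp2 a b) bi2 = idm b;
  bp1i2 : forall a b, comp (@bp1 a b) bi2 = zer;
  bp2i1 : forall a b, comp (@bp2 a b) bi1 = zer;
  bp_sum : forall a b, add (comp bi1 (@bp1 a b)) (comp bi2 bp2) = idm (bp a b);
  (* finite limits (with the zero object and biproducts): equalizers;
     finite colimits: coequalizers *)
  has_equalizers : forall a b (f g : hom a b),
      exists (e : ob C) (m : hom e a), IsEqualizer f g m;
  has_coequalizers : forall a b (f g : hom a b),
      exists (c : ob C) (q : hom b c), IsCoequalizer f g q;
  ten : ob C -> ob C -> ob C;
  tenm : forall {a a' b b'}, hom a a' -> hom b b' -> hom (ten a b) (ten a' b');
  tenm_id : forall a b, tenm (idm a) (idm b) = idm (ten a b);
  tenm_comp : forall a a' a'' b b' b'' (f : hom a a') (f' : hom a' a'')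
      (g : hom b b') (g' : hom b' b''),
      tenm (comp f' f) (comp g' g) = comp (tenm f' g') (tenm f g);
  I : ob C;
  asc : forall a b c, hom (ten (ten a b) c) (ten a (ten b c));
  asci : forall a b c, hom (ten a (ten b c)) (ten (ten a b) c);
  asc_iso1 : forall a b c, comp (asci a b c) (asc a b c) = idm _;
  asc_iso2 : forall a b c, comp (asc a b c) (asci a b c) = idm _;
  asc_nat : forall a a' b b' c c' (f : hom a a') (g : hom b b') (h : hom c c'),
      comp (asc a' b' c') (tenm (tenm f g) h) = comp (tenm f (tenm g h)) (asc a b c);
  lu : forall a, hom (ten I a) a;
  lui : forall a, hom a (ten I a);
  lu_iso1 : forall a, comp (lui a) (lu a) = idm _;
  lu_iso2 : forall a, comp (lu a) (lui a) = idm _;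
  lu_nat : forall a b (f : hom a b), comp (lu b) (tenm (idm I) f) = comp f (lu a);
  ru : forall a, hom (ten a I) a;
  rui : forall a, hom a (ten a I);
  ru_iso1 : forall a, comp (rui a) (ru a) = idm _;
  ru_iso2 : forall a, comp (ru a) (rui a) = idm _;
  ru_nat : forall a b (f : hom a b), comp (ru b) (tenm f (idm I)) = comp f (ru a);
  pentagon : forall a b c d,
      comp (asc a b (ten c d)) (asc (ten a b) c d)
      = comp (tenm (idm a) (asc b c d)) (comp (asc a (ten b c) d) (tenm (asc a b c) (idm d)));
  triangle : forall a b,
      comp (tenm (idm a) (lu b)) (asc a I b) = tenm (ru a) (idm b);
  tenm_addl : forall a a' b b' (f g : hom a a') (h : hom b b'),
      tenm (add f g) h = add (tenm f h) (tenm g h);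
  tenm_addr : forall a a' b b' (h : hom a a') (f g : hom b b'),
      tenm h (add f g) = add (tenm h f) (tenm h g);
  (* tensor preserves finite colimits in each variable (initial objects and
     binary coproducts are preserved by additivity; coequalizers: *)
  ten_pres_coeq_l : forall x a b c (f g : hom a b) (q : hom b c),
      IsCoequalizer f g q ->
      IsCoequalizer (tenm (idm x) f) (tenm (idm x) g) (tenm (idm x) q);
  ten_pres_coeq_r : forall x a b c (f g : hom a b) (q : hom b c),
      IsCoequalizer f g q ->
      IsCoequalizer (tenm f (idm x)) (tenm g (idm x)) (tenm q (idm x))
}.
Arguments zer {C M a b} : rename.
Arguments add {C M a b} _ _ : rename.
Arguments opp {C M a b} _ : rename.
Arguments bp {C} M _ _ : rename.
Arguments bi1 {C M a b} : rename.
Arguments bi2 {C M a b} : rename.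
Arguments bp1 {C M a b} : rename.
Arguments bp2 {C M a b} : rename.
Arguments ten {C} M _ _ : rename.
Arguments tenm {C M a a' b b'} _ _ : rename.
Arguments I {C} M : rename.
Arguments asc {C M} a b c : rename.
Arguments lu {C M} a : rename.
Arguments ru {C M} a : rename.

Definition castV {C : Cat} {a a' b b' : ob C} (p : a = a') (q : b = b')
  (h : hom a b) : hom a' b' :=
  match p in _ = x return hom x b' with
  | eq_refl => match q in _ = y return hom a y with eq_refl => h end
  end.

Section Monoids.
Variables (C : Cat) (M : MonAddCat C).

Record MonData := { mcar : ob C;
                    mmul : hom (ten M mcar mcar) mcar;
                    munit : hom (I M) mcar }.

Definition IsMonoid (A : MonData) : Prop :=
  comp (mmul A) (tenm (mmul A) (idm _))
    = comp (mmul A) (comp (tenm (idm _) (mmul A)) (asc _ _ _)) /\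
  comp (mmul A) (tenm (munit A) (idm _)) = lu _ /\
  comp (mmul A) (tenm (idm _) (munit A)) = ru _.

Definition IsMonHom (A B : MonData) (f : hom (mcar A) (mcar B)) : Prop :=
  comp f (mmul A) = comp (mmul B) (tenm f f) /\ comp f (munit A) = munit B.

Record BimodData (A : MonData) := { bcar : ob C;
                                    bl : hom (ten M (mcar A) bcar) bcar;
                                    br : hom (ten M bcar (mcar A)) bcar }.

Definition IsBimod (A : MonData) (N : BimodData A) : Prop :=
  comp (bl N) (tenm (mmul A) (idm _)) = comp (bl N) (comp (tenm (idm _) (bl N)) (asc _ _ _)) /\
  comp (bl N) (tenm (munit A) (idm _)) = lu _ /\
  comp (br N) (tenm (br N) (idm _)) = comp (br N) (comp (tenm (idm _) (mmul A)) (asc _ _ _)) /\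
  comp (br N) (tenm (idm _) (munit A)) = ru _ /\
  comp (bl N) (comp (tenm (idm _) (br N)) (asc _ _ _)) = comp (br N) (tenm (bl N) (idm _)).

Definition IsBimodHom (A B : MonData) (f : hom (mcar A) (mcar B))
  (N : BimodData A) (N' : BimodData B) (g : hom (bcar N) (bcar N')) : Prop :=
  comp g (bl N) = comp (bl N') (tenm f g) /\ comp g (br N) = comp (br N') (tenm g f).

Definition pairing {x a b : ob C} (f1 : hom x a) (f2 : hom x b) : hom x (bp M a b) :=
  add (M:=M) (comp bi1 f1) (comp bi2 f2).

(* square-zero extension U(A,N) = A (+) N, unit (i,0), multiplication (m, mu+nu+0) *)
Definition sqz (A : MonData) (N : BimodData A) : MonData := {|
  mcar := bp M (mcar A) (bcar N);
  mmul := add (M:=M) (comp bi1 (comp (mmul A) (tenm bp1 bp1)))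
              (comp bi2 (add (M:=M) (comp (bl N) (tenm bp1 bp2)) (comp (br N) (tenm bp2 bp1))));
  munit := comp bi1 (munit A) |}.

Definition sqzmap {a a' b b' : ob C} (f : hom a a') (g : hom b b')
  : hom (bp M a b) (bp M a' b') :=
  add (M:=M) (comp bi1 (comp f bp1)) (comp bi2 (comp g bp2)).
End Monoids.
Arguments mcar {C M} _.
Arguments mmul {C M} _.
Arguments munit {C M} _.
Arguments bcar {C M A} _.
Arguments bl {C M A} _.
Arguments br {C M A} _.
Arguments IsMonoid {C M} A.
Arguments IsMonHom {C M} A B f.
Arguments IsBimod {C M} A N.
Arguments IsBimodHom {C M A B} f {N N'} g.
Arguments pairing {C M x a b} f1 f2.
Arguments sqz {C M} A N.
Arguments sqzmap {C M a a' b b'} f g.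

Record MonFunctor (C : Cat) (M : MonAddCat C) (E : Cat) := {
  F0 : ob E -> MonData M;
  F1 : forall {X Y : ob E}, hom X Y -> hom (mcar (F0 X)) (mcar (F0 Y));
  F0_mon : forall X, IsMonoid (F0 X);
  F1_hom : forall X Y (u : hom X Y), IsMonHom (F0 X) (F0 Y) (F1 u);
  F1_id : forall X, F1 (idm X) = idm _;
  F1_comp : forall X Y Z (v : hom Y Z) (u : hom X Y), F1 (comp v u) = comp (F1 v) (F1 u) }.
Arguments F0 {C M E} F _ : rename.
Arguments F1 {C M E} F {X Y} _ : rename.
Arguments F0_mon {C M E} F X : rename.

Section Fib.
Variables (C : Cat) (M : MonAddCat C) (E : Cat) (F : MonFunctor M E).

Definition Faithful : Prop :=
  forall X Y (u v : hom X Y), F1 F u = F1 F v -> u = v.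

Definition Isofibration : Prop :=
  forall (X : ob E) (B : MonData M) (phi : hom (mcar (F0 F X)) (mcar B)),
    IsMonoid B -> IsMonHom (F0 F X) B phi -> IsIso phi ->
    exists (Y : ob E) (psi : hom X Y) (e : F0 F Y = B),
      IsIso psi /\ castV eq_refl (f_equal mcar e) (F1 F psi) = phi.

(* -------- Mod(E): pullback of U along (-)_0 -------- *)
Record ModEOb := {
  mx : ob E;
  mA : MonData M;
  mM : BimodData mA;
  me : F0 F mx = sqz mA mM;
  mA_mon : IsMonoid mA;
  mM_bimod : IsBimod mA mM }.

Record ModEHom (X Y : ModEOb) := {
  mu : hom (mx X) (mx Y);
  mf : hom (mcar (mA X)) (mcar (mA Y));
  mg : hom (bcar (mM X)) (bcar (mM Y));
  mf_hom : IsMonHom (mA X) (mA Y) mf;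
  mg_hom : IsBimodHom mf mg;
  mu_over : castV (f_equal mcar (me X)) (f_equal mcar (me Y)) (F1 F mu) = sqzmap mf mg }.

Definition UnivArrowU' (e : ob E) (Y : ModEOb) (eta : hom e (mx Y)) : Prop :=
  forall (Z : ModEOb) (f : hom e (mx Z)),
    exists! g : ModEHom Y Z, comp (mu g) eta = f.

Definition HasLeftAdjointU' : Prop :=
  forall e : ob E, exists (Y : ModEOb) (eta : hom e (mx Y)), UnivArrowU' eta.

Record EModOb (e : ob E) := {
  Eh : ob E;
  Om : BimodData (F0 F e);
  Oe : F0 F Eh = sqz (F0 F e) Om;
  Om_bimod : IsBimod (F0 F e) Om }.

Record EModHom (e : ob E) (O O' : EModOb e) := {
  eu : hom (Eh O) (Eh O');
  eh : hom (bcar (Om O)) (bcar (Om O'));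
  eh_hom : IsBimodHom (idm (mcar (F0 F e))) eh;
  eu_over : castV (f_equal mcar (Oe O)) (f_equal mcar (Oe O')) (F1 F eu)
            = sqzmap (idm _) eh }.

Definition inclE (e : ob E) (O : EModOb e) : ModEOb :=
  {| mx := Eh O; mA := F0 F e; mM := Om O; me := Oe O;
     mA_mon := F0_mon F e; mM_bimod := Om_bimod O |}.

(* epimorphisms in {}_E Mod_E (composition is componentwise) *)
Definition EpiEMod (e : ob E) (O O' : EModOb e) (g : EModHom O O') : Prop :=
  forall (O'' : EModOb e) (p q : EModHom O' O''),
    comp (eu p) (eu g) = comp (eu q) (eu g) ->
    comp (eh p) (eh g) = comp (eh q) (eh g) -> p = q.

(* V_E : {}_E Mod_E -> V,  O |-> underlying object of O_0;  left adjoint L_E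
   given by universal arrows *)
Record LeftAdjV (e : ob E) := {
  la_ob : ob C -> EModOb e;
  la_unit : forall x : ob C, hom x (bcar (Om (la_ob x)));
  la_univ : forall (x : ob C) (O : EModOb e) (f : hom x (bcar (Om O))),
      exists! g : EModHom (la_ob x) O, comp (eh g) (la_unit x) = f }.

Definition WeaklyVGeometrical : Prop :=
  forall (e : ob E) (X : ModEOb) (f : hom e (mx X)),
    Mono (comp bp1 (castV eq_refl (f_equal mcar (me X)) (F1 F f))) ->
    exists (Yx : ob E) (N : BimodData (F0 F e)) (eY : F0 F Yx = sqz (F0 F e) N)
           (HN : IsBimod (F0 F e) N),
      let Y := {| mx := Yx; mA := F0 F e; mM := N; me := eY;
                  mA_mon := F0_mon F e; mM_bimod := HN |} in
      exists (k : hom e Yx) (l : ModEHom Y X),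
        (exists k1 : hom (mcar (F0 F e)) (bcar N),
            castV eq_refl (f_equal mcar eY) (F1 F k) = pairing (idm _) k1) /\
        comp (mu l) k = f.

Definition VGeometrical : Prop :=
  WeaklyVGeometrical /\ forall e : ob E, inhabited (LeftAdjV e).

Definition FirstOrderCalculus (e : ob E) (L : LeftAdjV e) (O : EModOb e)
  (d : hom (mcar (F0 F e)) (bcar (Om O))) : Prop :=
  IsMonHom (F0 F e) (sqz (F0 F e) (Om O)) (pairing (idm _) d) /\
  (exists dh : hom e (Eh O),
      castV eq_refl (f_equal mcar (Oe O)) (F1 F dh) = pairing (idm _) d) /\
  (exists dt : EModHom (la_ob L (mcar (F0 F e))) O,
      comp (eh dt) (la_unit L (mcar (F0 F e))) = d /\ EpiEMod dt).
End Fib.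
Arguments UnivArrowU' {C M E F e} Y eta.
Arguments FirstOrderCalculus {C M E F e} L O d.
Arguments EpiEMod {C M E F e O O'} g.
Arguments inclE {C M E F e} O.

(* The unit [eta : E -> U'L'E] of the adjunction lives over a monoid [A] which need
   not be [E_0].  Its first component [E_0 -> A] has a retraction (map the unit into
   the lift of [E_0 (+) 0]), hence is mono, so weak geometricity factors [eta] through
   an object over [E_0]; universality makes the two comparison maps inverse monoid
   isomorphisms.  Restricting scalars along this isomorphism and lifting it along the
   isofibration gives an isomorphic object [Omega] of [{}_E Mod_E], whose transported
   unit has the form [(1, d)].  Finally [d^t] is epi: two maps out of [Omega] that
   agree after [d] agree after the unit (by faithfulness of [(-)_0]), hence coincide
   by universality. *)
From Stdlib Require Import Logic.ProofIrrelevance.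
Set Implicit Arguments.
Unset Strict Implicit.

Section Categories.
Variable C : Cat.

Lemma castV_comp (a a' b b' c c' : ob C) (p : a = a') (r : b = b') (q : c = c')
  (g : hom b c) (f : hom a b) :
  castV p q (comp g f) = comp (castV r q g) (castV p r f).
Proof. destruct p, q, r; reflexivity. Qed.

Lemma castV_idm (a a' : ob C) (p : a = a') : castV p p (idm a) = idm a'.
Proof. destruct p; reflexivity. Qed.

Lemma castV_inj (a a' b b' : ob C) (p : a = a') (q : b = b') (f g : hom a b) :
  castV p q f = castV p q g -> f = g.
Proof. destruct p, q; exact (fun h => h). Qed.

Lemma castV_split (a a' b b' : ob C) (p : a = a') (q : b = b') (h : hom a b) :
  castV p q h = comp (castV eq_refl q h) (castV p eq_refl (idm a)).
Proof. destruct p, q; simpl; now rewrite comp_id_r. Qed.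

Lemma castV_idmK (a a' : ob C) (p : a = a') :
  comp (castV p eq_refl (idm a)) (castV eq_refl p (idm a)) = idm a.
Proof. destruct p; apply comp_id_l. Qed.

Lemma castV_idmKV (a a' : ob C) (p : a = a') :
  comp (castV eq_refl p (idm a)) (castV p eq_refl (idm a)) = idm a'.
Proof. destruct p; apply comp_id_l. Qed.

Lemma comp_cancel_l (a b x : ob C) (f : hom a b) (g : hom b a) (h : hom x a) :
  comp g f = idm _ -> comp g (comp f h) = h.
Proof. intro H; rewrite comp_assoc, H, comp_id_l; reflexivity. Qed.

Lemma retraction_mono (a b : ob C) (f : hom a b) (r : hom b a) :
  comp r f = idm a -> Mono f.
Proof.
  intros rf z u v H.
  now rewrite <- (comp_cancel_l u rf), <- (comp_cancel_l v rf), H.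
Qed.
End Categories.

Section Biproducts.
Variables (C : Cat) (M : MonAddCat C).
Notation "f +' g" := (add (M:=M) f g) (at level 50, left associativity).

Lemma add_0r a b (f : hom a b) : f +' zer (M:=M) = f.
Proof. rewrite add_comm; apply add_0l. Qed.

Lemma add_idem_zer a b (x : hom a b) : x = x +' x -> zer (M:=M) = x.
Proof.
  intro H. transitivity (opp (M:=M) x +' (x +' x)).
  - rewrite <- H. symmetry; apply add_oppl.
  - rewrite add_assoc, add_oppl, add_0l. reflexivity.
Qed.

Lemma comp_zer_l a b c (f : hom a b) : comp (@zer C M b c) f = zer (M:=M).
Proof. symmetry; apply add_idem_zer. rewrite <- comp_addl, add_0l. reflexivity. Qed.

Lemma comp_zer_r a b c (f : hom b c) : comp f (@zer C M a b) = zer (M:=M).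
Proof. symmetry; apply add_idem_zer. rewrite <- comp_addr, add_0l. reflexivity. Qed.

Lemma zob_hom_unique a (f g : hom a (zob M)) : f = g.
Proof.
  rewrite <- (comp_id_l f), <- (comp_id_l g), zob_id, !comp_zer_l. reflexivity.
Qed.

Lemma bp_ext x a b (h k : hom x (bp M a b)) :
  comp bp1 h = comp bp1 k -> comp bp2 h = comp bp2 k -> h = k.
Proof.
  intros H1 H2. rewrite <- (comp_id_l h), <- (comp_id_l k), <- bp_sum, !comp_addl,
    <- !comp_assoc, H1, H2. reflexivity.
Qed.

Lemma bp1_pairing x a b (f : hom x a) (g : hom x b) : comp bp1 (pairing (M:=M) f g) = f.
Proof.
  unfold pairing. rewrite comp_addr, !comp_assoc, bp1i1, bp1i2, comp_id_l, comp_zer_l, add_0r.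
  reflexivity.
Qed.

Lemma bp2_pairing x a b (f : hom x a) (g : hom x b) : comp bp2 (pairing (M:=M) f g) = g.
Proof.
  unfold pairing. rewrite comp_addr, !comp_assoc, bp2i2, bp2i1, comp_id_l, comp_zer_l, add_0l.
  reflexivity.
Qed.

Lemma pairing_eta x a b (h : hom x (bp M a b)) : h = pairing (comp bp1 h) (comp bp2 h).
Proof. apply bp_ext; now rewrite ?bp1_pairing, ?bp2_pairing. Qed.

Lemma pairing_comp y x a b (f : hom x a) (g : hom x b) (h : hom y x) :
  comp (pairing (M:=M) f g) h = pairing (comp f h) (comp g h).
Proof. apply bp_ext; rewrite comp_assoc, ?bp1_pairing, ?bp2_pairing; reflexivity. Qed.

Lemma bp1_sqzmap a a' b b' (f : hom a a') (g : hom b b') :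
  comp bp1 (sqzmap (M:=M) f g) = comp f bp1.
Proof. apply (bp1_pairing (comp f bp1) (comp g bp2)). Qed.

Lemma bp2_sqzmap a a' b b' (f : hom a a') (g : hom b b') :
  comp bp2 (sqzmap (M:=M) f g) = comp g bp2.
Proof. apply (bp2_pairing (comp f bp1) (comp g bp2)). Qed.

Lemma sqzmap_pairing x a a' b b' (f : hom a a') (g : hom b b') (u : hom x a) (v : hom x b) :
  comp (sqzmap (M:=M) f g) (pairing u v) = pairing (comp f u) (comp g v).
Proof.
  apply bp_ext; rewrite comp_assoc, ?bp1_sqzmap, ?bp2_sqzmap, <- comp_assoc,
    ?bp1_pairing, ?bp2_pairing; reflexivity.
Qed.

Lemma sqzmap_comp a a' a'' b b' b'' (f : hom a a') (g : hom b b') (f' : hom a' a'')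
  (g' : hom b' b'') :
  comp (sqzmap (M:=M) f' g') (sqzmap f g) = sqzmap (comp f' f) (comp g' g).
Proof.
  apply bp_ext; rewrite comp_assoc, ?bp1_sqzmap, ?bp2_sqzmap, <- comp_assoc,
    ?bp1_sqzmap, ?bp2_sqzmap, comp_assoc; reflexivity.
Qed.

Lemma sqzmap_id a b : sqzmap (M:=M) (idm a) (idm b) = idm _.
Proof. apply bp_ext; rewrite ?bp1_sqzmap, ?bp2_sqzmap, comp_id_l, comp_id_r; reflexivity. Qed.

Lemma sqzmap_bi1 a a' b b' (f : hom a a') (g : hom b b') :
  comp (sqzmap (M:=M) f g) bi1 = comp bi1 f.
Proof.
  apply bp_ext.
  - rewrite comp_assoc, bp1_sqzmap, <- (comp_assoc f), bp1i1, comp_id_r,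
      (comp_assoc bp1), bp1i1, comp_id_l. reflexivity.
  - rewrite comp_assoc, bp2_sqzmap, <- (comp_assoc g), bp2i1, comp_zer_r,
      (comp_assoc bp2), bp2i1, comp_zer_l. reflexivity.
Qed.

End Biproducts.

Section Tensor.
Variables (C : Cat) (M : MonAddCat C).

Lemma comp_tenm a a' a'' b b' b'' (f : hom a a') (f' : hom a' a'') (g : hom b b')
  (g' : hom b' b'') :
  comp (tenm (M:=M) f' g') (tenm f g) = tenm (comp f' f) (comp g' g).
Proof. symmetry; apply tenm_comp. Qed.

Lemma comp_tenmA x a a' a'' b b' b'' (f : hom a a') (f' : hom a' a'') (g : hom b b')
  (g' : hom b' b'') (h : hom x (ten M a b)) :
  comp (tenm (M:=M) f' g') (comp (tenm f g) h) = comp (tenm (comp f' f) (comp g' g)) h.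
Proof. rewrite comp_assoc, comp_tenm; reflexivity. Qed.

Lemma tenm_compl a a' a'' b b' (f : hom a' a'') (g : hom a a') (k : hom b b') :
  tenm (M:=M) (comp f g) k = comp (tenm f (idm _)) (tenm g k).
Proof. rewrite comp_tenm, comp_id_l; reflexivity. Qed.

Lemma tenm_compr a a' a'' b b' (f : hom a' a'') (g : hom a a') (k : hom b b') :
  tenm (M:=M) k (comp f g) = comp (tenm (idm _) f) (tenm k g).
Proof. rewrite comp_tenm, comp_id_l; reflexivity. Qed.
End Tensor.

Ltac simpl_comp := repeat rewrite <- comp_assoc;
  repeat (rewrite comp_tenmA || rewrite comp_tenm);
  repeat rewrite comp_id_l; repeat rewrite comp_id_r.

Section Monoids.
Variables (C : Cat) (M : MonAddCat C).

Lemma monhom_id (A : MonData M) : IsMonHom A A (idm _).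
Proof. split; rewrite ?tenm_id, comp_id_l, ?comp_id_r; reflexivity. Qed.

Lemma monhom_comp (A B D : MonData M) f g :
  IsMonHom A B f -> IsMonHom B D g -> IsMonHom A D (comp g f).
Proof.
  intros [f1 f2] [g1 g2]; split.
  - rewrite <- comp_assoc, f1, comp_assoc, g1, <- comp_assoc, comp_tenm; reflexivity.
  - rewrite <- comp_assoc, f2, g2; reflexivity.
Qed.

Lemma monhom_inv (A B : MonData M) f g :
  IsMonHom A B f -> comp g f = idm _ -> comp f g = idm _ -> IsMonHom B A g.
Proof.
  intros [f1 f2] gf fg; split.
  - rewrite <- (comp_id_r (mmul B)), <- tenm_id, <- fg, tenm_comp, (comp_assoc (mmul B)),
      <- f1, (comp_assoc g), (comp_assoc g f), gf, comp_id_l. reflexivity.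
  - rewrite <- f2, comp_assoc, gf, comp_id_l. reflexivity.
Qed.

Lemma monhom_cast (A B B' : MonData M) (e : B = B') f :
  IsMonHom A B f -> IsMonHom A B' (castV eq_refl (f_equal mcar e) f).
Proof. destruct e; auto. Qed.

(* The monoid axioms of [A] are carried over to [B] by conjugating with [f]. *)
Lemma monoid_transfer (A B : MonData M) f g :
  IsMonoid A -> IsMonHom A B f -> comp g f = idm _ -> comp f g = idm _ -> IsMonoid B.
Proof.
  intros [a1 [a2 a3]] [f1 f2] gf fg.
  assert (mulB : mmul B = comp f (comp (mmul A) (tenm g g))).
  { rewrite comp_assoc, f1, <- comp_assoc, comp_tenm, fg, tenm_id, comp_id_r; reflexivity. }
  assert (unitB : munit B = comp f (munit A)) by (symmetry; exact f2).
  split; [|split]; rewrite mulB, ?unitB; simpl_comp;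
    rewrite ?(comp_cancel_l _ gf); simpl_comp.
  - assert (E1 : tenm (M:=M) (comp (mmul A) (tenm g g)) g
           = comp (tenm (mmul A) (idm _)) (tenm (tenm g g) g)) by apply tenm_compl.
    assert (E2 : tenm (M:=M) g (comp (mmul A) (tenm g g))
           = comp (tenm (idm _) (mmul A)) (tenm g (tenm g g))) by apply tenm_compr.
    rewrite E1, E2, (comp_assoc (mmul A)), a1, <- !comp_assoc, asc_nat. reflexivity.
  - assert (E1 : tenm (M:=M) (munit A) g = comp (tenm (munit A) (idm _)) (tenm (idm _) g))
      by (rewrite comp_tenm, comp_id_l, comp_id_r; reflexivity).
    rewrite E1, (comp_assoc (mmul A)), a2, lu_nat, comp_assoc, fg, comp_id_l; reflexivity.
  - assert (E1 : tenm (M:=M) g (munit A) = comp (tenm (idm _) (munit A)) (tenm g (idm _)))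
      by (rewrite comp_tenm, comp_id_l, comp_id_r; reflexivity).
    rewrite E1, (comp_assoc (mmul A)), a3, ru_nat, comp_assoc, fg, comp_id_l; reflexivity.
Qed.

Definition bimod_restr (A A' : MonData M) (h : hom (mcar A') (mcar A)) (N : BimodData A)
  : BimodData A' :=
  {| bcar := bcar N; bl := comp (bl N) (tenm h (idm _));
     br := comp (br N) (tenm (idm _) h) |}.

Lemma bimod_restrP (A A' : MonData M) h (N : BimodData A) :
  IsMonHom A' A h -> IsBimod A N -> IsBimod A' (bimod_restr h N).
Proof.
  intros [h1 h2] [n1 [n2 [n3 [n4 n5]]]].
  unfold IsBimod, bimod_restr; simpl.
  split; [|split; [|split; [|split]]]; simpl_comp.
  - rewrite h1, tenm_compl, (comp_assoc (bl N)), n1. simpl_comp. rewrite asc_nat.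
    simpl_comp. reflexivity.
  - rewrite h2; exact n2.
  - rewrite h1, tenm_compl, (comp_assoc (br N)), n3. simpl_comp. rewrite asc_nat.
    simpl_comp. reflexivity.
  - rewrite h2; exact n4.
  - rewrite tenm_compr, tenm_compl. repeat rewrite <- comp_assoc. rewrite <- asc_nat.
    rewrite (comp_assoc (tenm (idm _) (br N))), (comp_assoc (bl N)), n5. simpl_comp.
    reflexivity.
Qed.

Lemma bimodhom_restr (A A' : MonData M) (h : hom (mcar A') (mcar A)) j (N : BimodData A) :
  comp h j = idm _ -> IsBimodHom (N:=N) (N':=bimod_restr h N) j (idm _).
Proof.
  intro hj; split; unfold bimod_restr; cbn [bl br bcar]; simpl_comp;
    rewrite hj, tenm_id, comp_id_r; reflexivity.
Qed.

Lemma bimodhom_unrestr (A A' : MonData M) (h : hom (mcar A') (mcar A)) (N : BimodData A) :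
  IsBimodHom (N:=bimod_restr h N) (N':=N) h (idm _).
Proof. split; unfold bimod_restr; cbn [bl br bcar]; rewrite comp_id_l; reflexivity. Qed.

Lemma mmul_sqz (A : MonData M) (N : BimodData A) :
  mmul (sqz A N) = pairing (comp (mmul A) (tenm bp1 bp1))
                           (add (M:=M) (comp (bl N) (tenm bp1 bp2)) (comp (br N) (tenm bp2 bp1))).
Proof. reflexivity. Qed.

Lemma monhom_sqzmap_restr (A A' : MonData M) (N : BimodData A) j h :
  IsMonHom A A' j -> comp h j = idm _ ->
  IsMonHom (sqz A N) (sqz A' (bimod_restr h N)) (sqzmap j (idm _)).
Proof.
  intros [j1 j2] hj; split.
  - rewrite !mmul_sqz; cbn [mcar sqz bimod_restr bl br bcar].
    apply bp_ext; rewrite pairing_comp.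
    + rewrite bp1_pairing, (comp_assoc bp1), bp1_sqzmap, <- (comp_assoc j), bp1_pairing,
        (comp_assoc j), j1. simpl_comp. rewrite !bp1_sqzmap. reflexivity.
    + rewrite bp2_pairing, (comp_assoc bp2), bp2_sqzmap, <- (comp_assoc (idm _)),
        bp2_pairing, comp_id_l, comp_addl. simpl_comp.
      rewrite ?bp1_sqzmap, ?bp2_sqzmap. simpl_comp.
      rewrite ?bp1_sqzmap, ?bp2_sqzmap, !(comp_cancel_l _ hj). reflexivity.
  - cbn [mcar mmul munit sqz bimod_restr bl br bcar].
    rewrite comp_assoc, sqzmap_bi1, <- comp_assoc, j2. reflexivity.
Qed.

Lemma monoid_sqz_restr (A A' : MonData M) (N : BimodData A) j h :
  IsMonoid (sqz A N) -> IsMonHom A A' j -> comp h j = idm _ -> comp j h = idm _ ->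
  IsMonoid (sqz A' (bimod_restr h N)).
Proof.
  intros HA Hj hj jh.
  apply (@monoid_transfer (sqz A N) (sqz A' (bimod_restr h N)) (sqzmap j (idm _))
           (sqzmap h (idm _)) HA (monhom_sqzmap_restr N Hj hj));
    simpl; rewrite sqzmap_comp, ?hj, ?jh, comp_id_l, sqzmap_id; reflexivity.
Qed.

Definition zero_bimod (A : MonData M) : BimodData A :=
  {| bcar := zob M; bl := zer (M:=M); br := zer (M:=M) |}.

Lemma zero_bimodP (A : MonData M) : IsBimod A (zero_bimod A).
Proof. repeat split; apply zob_hom_unique. Qed.

Lemma bp1_bi1_zero (A : MonData M) :
  comp (bi1 (M:=M)) bp1 = idm (mcar (sqz A (zero_bimod A))).
Proof.
  apply bp_ext.
  - rewrite comp_assoc, bp1i1, comp_id_l, comp_id_r; reflexivity.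
  - apply zob_hom_unique.
Qed.

Lemma monhom_bi1_zero (A : MonData M) : IsMonHom A (sqz A (zero_bimod A)) bi1.
Proof.
  split; [|reflexivity].
  rewrite mmul_sqz; cbn [mcar sqz bcar zero_bimod]. apply bp_ext.
  - rewrite pairing_comp, bp1_pairing, (comp_assoc bp1 bi1), bp1i1,
      comp_id_l. simpl_comp. rewrite bp1i1, tenm_id, comp_id_r; reflexivity.
  - apply zob_hom_unique.
Qed.

Lemma monoid_sqz_zero (A : MonData M) : IsMonoid A -> IsMonoid (sqz A (zero_bimod A)).
Proof.
  intro HA. exact (monoid_transfer HA (monhom_bi1_zero A) (bp1i1 _ _ _) (bp1_bi1_zero A)).
Qed.
End Monoids.

Section ModE.
Variables (C : Cat) (M : MonAddCat C) (E : Cat) (F : MonFunctor M E).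

Definition F1_sqz (x : ob E) (X : ModEOb F) (u : hom x (mx X))
  : hom (mcar (F0 F x)) (bp M (mcar (mA X)) (bcar (mM X))) :=
  castV eq_refl (f_equal mcar (me X)) (F1 F u).

Lemma monhom_F1_sqz (x : ob E) (X : ModEOb F) (u : hom x (mx X)) :
  IsMonHom (F0 F x) (sqz (mA X) (mM X)) (F1_sqz u).
Proof. exact (monhom_cast (me X) (F1_hom F u)). Qed.

Lemma F1_sqz_comp (x : ob E) (X Z : ModEOb F) (g : ModEHom X Z) (u : hom x (mx X)) :
  F1_sqz (comp (mu g) u) = comp (sqzmap (mf g) (mg g)) (F1_sqz u).
Proof.
  unfold F1_sqz. rewrite F1_comp, (castV_comp _ (f_equal mcar (me X))), mu_over.
  reflexivity.
Qed.

Lemma F1_sqz_fst_comp (x : ob E) (X Z : ModEOb F) (g : ModEHom X Z) (u : hom x (mx X)) :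
  comp bp1 (F1_sqz (comp (mu g) u)) = comp (mf g) (comp bp1 (F1_sqz u)).
Proof. rewrite F1_sqz_comp, !comp_assoc, bp1_sqzmap. reflexivity. Qed.

Definition modE_comp (X Y Z : ModEOb F) (v : ModEHom Y Z) (u : ModEHom X Y) : ModEHom X Z.
Proof.
  refine {| mu := comp (mu v) (mu u); mf := comp (mf v) (mf u); mg := comp (mg v) (mg u) |}.
  - apply monhom_comp; apply mf_hom.
  - destruct (mg_hom u) as [u1 u2], (mg_hom v) as [v1 v2]. split.
    + rewrite <- comp_assoc, u1, comp_assoc, v1, <- comp_assoc, comp_tenm; reflexivity.
    + rewrite <- comp_assoc, u2, comp_assoc, v2, <- comp_assoc, comp_tenm; reflexivity.
  - rewrite F1_comp, (castV_comp _ (f_equal mcar (me Y))), !mu_over. apply sqzmap_comp.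
Defined.

Definition modE_id (X : ModEOb F) : ModEHom X X.
Proof.
  refine {| mu := idm _; mf := idm _; mg := idm _ |}.
  - apply monhom_id.
  - split; rewrite tenm_id, comp_id_l, comp_id_r; reflexivity.
  - rewrite F1_id, castV_idm, sqzmap_id. reflexivity.
Defined.

Lemma modE_ext (X Y : ModEOb F) (u v : ModEHom X Y) :
  mu u = mu v -> mf u = mf v -> mg u = mg v -> u = v.
Proof. destruct u, v; simpl; intros; subst. f_equal; apply proof_irrelevance. Qed.

Lemma modE_compA (W X Y Z : ModEOb F) (w : ModEHom Y Z) (v : ModEHom X Y)
  (u : ModEHom W X) :
  modE_comp w (modE_comp v u) = modE_comp (modE_comp w v) u.
Proof. apply modE_ext; apply comp_assoc. Qed.

Lemma modE_comp_id_r (X Y : ModEOb F) (u : ModEHom X Y) : modE_comp u (modE_id X) = u.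
Proof. apply modE_ext; apply comp_id_r. Qed.

Lemma emod_ext (e : ob E) (O O' : EModOb F e) (p q : EModHom O O') :
  eu p = eu q -> eh p = eh q -> p = q.
Proof. destruct p, q; simpl; intros; subst. f_equal; apply proof_irrelevance. Qed.

Definition modE_of_emod (e : ob E) (O O' : EModOb F e) (p : EModHom O O')
  : ModEHom (inclE O) (inclE O') :=
  @Build_ModEHom C M E F (inclE O) (inclE O') (eu p) (idm _) (eh p) (monhom_id _)
    (eh_hom p) (eu_over p).

Lemma univ_arrow_hom_ext (e : ob E) (Y : ModEOb F) (eta : hom e (mx Y)) :
  UnivArrowU' Y eta ->
  forall (Z : ModEOb F) (g g' : ModEHom Y Z),
  comp (mu g) eta = comp (mu g') eta -> g = g'.
Proof.
  intros Hu Z g g' Hgg'. destruct (Hu Z (comp (mu g) eta)) as [g0 [_ Huniq]].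
  rewrite <- (Huniq g eq_refl). exact (Huniq g' (eq_sym Hgg')).
Qed.

Lemma univ_arrow_iso (e : ob E) (Y Z : ModEOb F) (eta : hom e (mx Y))
  (P : ModEHom Y Z) (Q : ModEHom Z Y) :
  UnivArrowU' Y eta -> modE_comp Q P = modE_id Y -> modE_comp P Q = modE_id Z ->
  UnivArrowU' Z (comp (mu P) eta).
Proof.
  intros Hu QP PQ W f. destruct (Hu W f) as [g [Hg _]].
  exists (modE_comp g Q). split.
  - simpl. rewrite <- comp_assoc, (comp_assoc (mu Q)).
    change (comp (mu Q) (mu P)) with (mu (modE_comp Q P)). rewrite QP, comp_id_l.
    exact Hg.
  - intros h Hh.
    assert (Hgh : g = modE_comp h P).
    { apply (univ_arrow_hom_ext Hu). simpl. rewrite Hg, <- comp_assoc. exact (eq_sym Hh). }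
    rewrite Hgh, <- modE_compA, PQ. apply modE_comp_id_r.
Qed.

(* Lifting [A -> A (+) 0] along the isofibration gives an object of Mod(E) whose
   comparison map out of [U'Y] retracts the first component of the unit. *)
Lemma univ_arrow_fst_retraction (Hisofib : Isofibration F) (e : ob E) (Y : ModEOb F)
  (eta : hom e (mx Y)) :
  UnivArrowU' Y eta -> exists r, comp r (comp bp1 (F1_sqz eta)) = idm (mcar (F0 F e)).
Proof.
  intro Hu.
  assert (Hiso : IsIso (bi1 (M:=M) (a:=mcar (F0 F e)) (b:=zob M))).
  { exists bp1; split; [apply bp1i1 | apply (bp1_bi1_zero (F0 F e))]. }
  destruct (Hisofib e (sqz (F0 F e) (zero_bimod _)) bi1 (monoid_sqz_zero (F0_mon F e)) (monhom_bi1_zero _) Hiso)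
    as [Y0 [psi0 [e1 [_ Hpsi0]]]].
  pose (Z := {| mx := Y0; mA := F0 F e; mM := zero_bimod _; me := e1;
                mA_mon := F0_mon F e; mM_bimod := zero_bimodP _ |}).
  destruct (Hu Z psi0) as [g0 [Hg0 _]].
  exists (mf g0). transitivity (comp bp1 (F1_sqz (X:=Z) psi0)).
  { rewrite <- Hg0. symmetry; exact (F1_sqz_fst_comp g0 eta). }
  change (comp bp1 (castV eq_refl (f_equal mcar e1) (F1 F psi0)) = idm (mcar (F0 F e))).
  rewrite Hpsi0. apply bp1i1.
Qed.

(* Weak geometricity factors the unit through an object over [E_0]; the two
   comparison maps are then inverse to each other on monoids. *)
Lemma univ_arrow_fst_iso (Hw : WeaklyVGeometrical F) (Hisofib : Isofibration F)
  (e : ob E) (Y : ModEOb F) (eta : hom e (mx Y)) :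
  UnivArrowU' Y eta ->
  exists j : hom (mcar (mA Y)) (mcar (F0 F e)),
    IsMonHom (mA Y) (F0 F e) j /\
    comp j (comp bp1 (F1_sqz eta)) = idm _ /\ comp (comp bp1 (F1_sqz eta)) j = idm _.
Proof.
  intro Hu. destruct (univ_arrow_fst_retraction Hisofib Hu) as [r Hr].
  destruct (Hw e Y eta (retraction_mono Hr)) as [Yx [N [eY [HN HY']]]].
  cbv zeta in HY'. destruct HY' as [k [l [[k1 Hk1] Hlk]]].
  set (Y' := {| mx := Yx; mA := F0 F e; mM := N; me := eY; mA_mon := F0_mon F e;
                mM_bimod := HN |}) in *.
  assert (Hk : comp bp1 (F1_sqz (X:=Y') k) = idm _).
  { change (comp bp1 (castV eq_refl (f_equal mcar eY) (F1 F k)) = idm (mcar (F0 F e))).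
    rewrite Hk1. apply bp1_pairing. }
  destruct (Hu Y' k) as [g' [Hg' _]].
  exists (mf g'); split; [exact (mf_hom g') | split].
  - rewrite <- Hk, <- Hg'. symmetry; exact (F1_sqz_fst_comp g' eta).
  - assert (Hl : comp bp1 (F1_sqz eta) = mf l).
    { rewrite <- Hlk, F1_sqz_fst_comp, Hk. apply comp_id_r. }
    assert (Hlg : modE_comp l g' = modE_id Y).
    { apply (univ_arrow_hom_ext Hu); cbn [mu modE_comp modE_id].
      rewrite <- (comp_assoc (mu l)), Hg', Hlk. symmetry; apply comp_id_l. }
    rewrite Hl. exact (f_equal (@mf _ _ _ _ _ _) Hlg).
Qed.

(* Conjugating with the monoid isomorphism [j] and restricting scalars along its
   inverse [h] moves [Y] over [E_0]; the isofibration realises this in [E]. *)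
Lemma modE_iso_over (Hisofib : Isofibration F) (e : ob E) (Y : ModEOb F)
  (h : hom (mcar (F0 F e)) (mcar (mA Y))) (j : hom (mcar (mA Y)) (mcar (F0 F e))) :
  IsMonHom (mA Y) (F0 F e) j -> comp j h = idm _ -> comp h j = idm _ ->
  exists (O : EModOb F e) (P : ModEHom Y (inclE O)) (Q : ModEHom (inclE O) Y),
    mf P = j /\ modE_comp Q P = modE_id Y /\ modE_comp P Q = modE_id (inclE O).
Proof.
  intros Hj jh hj.
  pose proof (monhom_inv Hj hj jh) as Hh.
  set (N := bimod_restr h (mM Y)).
  assert (HA : IsMonoid (sqz (mA Y) (mM Y))) by (rewrite <- (me Y); apply F0_mon).
  set (cY := castV eq_refl (f_equal mcar (me Y)) (idm (mcar (F0 F (mx Y))))).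
  set (phi := comp (sqzmap j (idm (bcar (mM Y)))) cY).
  assert (Hphi : IsMonHom (F0 F (mx Y)) (sqz (F0 F e) N) phi)
    by exact (monhom_comp (monhom_cast (me Y) (monhom_id _)) (monhom_sqzmap_restr _ Hj hj)).
  assert (Hiso : IsIso phi).
  { exists (comp (castV (f_equal mcar (me Y)) eq_refl (idm _)) (sqzmap h (idm (bcar (mM Y))))).
    unfold phi, cY; split; cbn [mcar sqz].
    - rewrite <- !comp_assoc, (comp_assoc (sqzmap h _)), sqzmap_comp, hj, comp_id_l,
        sqzmap_id, comp_id_l. apply castV_idmK.
    - rewrite <- !comp_assoc, (comp_assoc (castV _ _ _)), castV_idmKV, comp_id_l,
        sqzmap_comp, jh, comp_id_l. apply sqzmap_id. }
  destruct (Hisofib (mx Y) (sqz (F0 F e) N) phi (monoid_sqz_restr HA Hj hj jh) Hphi Hiso)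
    as [Y2 [psi [e0 [[psi' [psi'psi psipsi']] Hpsi]]]].
  pose (O := {| Eh := Y2; Om := N; Oe := e0; Om_bimod := bimod_restrP Hh (mM_bimod Y) |}).
  assert (HP : castV (f_equal mcar (me Y)) (f_equal mcar e0) (F1 F psi) = sqzmap j (idm _)).
  { rewrite castV_split, Hpsi. unfold phi, cY. cbn [mcar sqz].
    rewrite <- comp_assoc, castV_idmKV, comp_id_r. reflexivity. }
  pose (P := @Build_ModEHom C M E F Y (inclE O) psi j (idm _) Hj (bimodhom_restr _ hj) HP).
  assert (HQ : castV (f_equal mcar e0) (f_equal mcar (me Y)) (F1 F psi') = sqzmap h (idm _)).
  { transitivity (comp (castV (f_equal mcar e0) (f_equal mcar (me Y)) (F1 F psi'))
                    (comp (sqzmap j (idm (bcar (mM Y)))) (sqzmap h (idm _)))).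
    - cbn [mcar sqz]. rewrite sqzmap_comp, jh, comp_id_l, sqzmap_id, comp_id_r. reflexivity.
    - rewrite comp_assoc, <- HP, <- castV_comp, <- F1_comp, psi'psi, F1_id, castV_idm,
        comp_id_l. reflexivity. }
  pose (Q := @Build_ModEHom C M E F (inclE O) Y psi' h (idm _) Hh (bimodhom_unrestr _ _) HQ).
  exists O, P, Q; split; [reflexivity | split]; apply modE_ext.
  - exact psi'psi.
  - exact hj.
  - apply comp_id_l.
  - exact psipsi'.
  - exact jh.
  - apply comp_id_l.
Qed.

Lemma univ_arrow_emod_hom_ext (Hfaith : Faithful F) (e : ob E) (O : EModOb F e)
  (eta : hom e (Eh O)) (d : hom (mcar (F0 F e)) (bcar (Om O))) :
  UnivArrowU' (inclE O) eta -> F1_sqz (X:=inclE O) eta = pairing (idm _) d ->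
  forall (O' : EModOb F e) (p q : EModHom O O'),
  comp (eh p) d = comp (eh q) d -> p = q.
Proof.
  intros Hu Hd O' p q Hpq.
  assert (Heta : comp (eu p) eta = comp (eu q) eta).
  { apply Hfaith, (castV_inj (p:=eq_refl) (q:=f_equal mcar (Oe O'))).
    change (F1_sqz (comp (mu (modE_of_emod p)) eta) = F1_sqz (comp (mu (modE_of_emod q)) eta)).
    rewrite !F1_sqz_comp, Hd, !sqzmap_pairing. f_equal. exact Hpq. }
  pose proof (univ_arrow_hom_ext Hu (g:=modE_of_emod p) (g':=modE_of_emod q) Heta) as Hpq'.
  apply emod_ext; [exact (f_equal (@mu _ _ _ _ _ _) Hpq') | exact (f_equal (@mg _ _ _ _ _ _) Hpq')].
Qed.

Lemma univ_arrow_calculus (Hfaith : Faithful F) (e : ob E) (L : LeftAdjV F e)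
  (O : EModOb F e) (eta : hom e (Eh O)) (d : hom (mcar (F0 F e)) (bcar (Om O))) :
  UnivArrowU' (inclE O) eta -> F1_sqz (X:=inclE O) eta = pairing (idm _) d ->
  FirstOrderCalculus L O d.
Proof.
  intros Hu Hd; split; [|split].
  - rewrite <- Hd. exact (monhom_F1_sqz (X:=inclE O) eta).
  - exists eta; exact Hd.
  - destruct (la_univ L d) as [dt [Hdt _]]. exists dt; split; [exact Hdt|].
    intros O' p q _ Hpq. apply (univ_arrow_emod_hom_ext Hfaith Hu Hd).
    rewrite <- Hdt, !comp_assoc, Hpq. reflexivity.
Qed.
End ModE.

Theorem proposition4p11 (C : Cat) (M : MonAddCat C) (E : Cat) (F : MonFunctor M E)
  (Hfaith : Faithful F) (Hisofib : Isofibration F)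
  (Hgeo : VGeometrical F)
  (LE : forall e : ob E, LeftAdjV F e)
  (HL' : HasLeftAdjointU' F) :
  forall e : ob E,
    exists (O : EModOb F e) (d : hom (mcar (F0 F e)) (bcar (Om O))) (eta : hom e (Eh O)),
      UnivArrowU' (inclE O) eta /\
      castV eq_refl (f_equal mcar (Oe O)) (F1 F eta) = pairing (idm _) d /\
      FirstOrderCalculus (LE e) O d.
Proof.
  intros e. destruct Hgeo as [Hw _]. destruct (HL' e) as [Y [eta Hu]].
  destruct (univ_arrow_fst_iso Hw Hisofib Hu) as [j [Hj [jh hj]]].
  destruct (modE_iso_over Hisofib Hj jh hj) as [O [P [Q [HPj [QP PQ]]]]].
  pose (eta' := comp (mu P) eta : hom e (Eh O)).
  pose proof (univ_arrow_iso Hu QP PQ : UnivArrowU' (inclE O) eta') as Hu'.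
  assert (Hd : F1_sqz (X:=inclE O) eta' = pairing (idm _) (comp bp2 (F1_sqz (X:=inclE O) eta'))).
  { etransitivity; [apply pairing_eta|]. f_equal.
    rewrite <- jh, <- HPj. exact (F1_sqz_fst_comp P eta). }
  exists O, (comp bp2 (F1_sqz (X:=inclE O) eta')), eta'.
  split; [exact Hu' | split; [exact Hd | exact (univ_arrow_calculus Hfaith (LE e) Hu' Hd)]].
Qed.
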